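(* Fix a state $x^\circ\in\mathsf{X}$ and let $\tau_{x^\circ}=\min\{t\ge1: X(t)=x^\circ\}$. Suppose the relative value function $h^*$ admits the stochastic shortest path (SSP) representation \[ h^*(x)=\min_{U}\mathsf{E}_x\Bigl[\sum_{t=0}^{\tau_{x^\circ}-1}\bigl(c(X(t),U(t))-\eta^*\bigr)\Bigr], \] with the minimum attained by an optimal stationary policy $\phi^*$ that is $(c,h^* )$-myopic. Let $h\colon\mathsf{X}\to\mathbb{R}$, let $\eta\in\mathbb{R}_+$, let $\mathcal{E}_B$ be the Bellman error of $h$ and $c^h(x,u)=c(x,u)-\mathcal{E}_B(x)+\eta$ the perturbed cost, and suppose $h$ admits the SSP representation \[ h(x)=\min_{U}\mathsf{E}_x\Bigl[\sum_{t=0}^{\tau_{x^\circ}-1}\bigl(c^h(X(t),U(t))-\eta\bigr)\Bigr], \] where the minimizing policy is the $(c^h,h)$-myopic policy $\phi^h$ (equivalently the $(c,h)$-myopic policy). Then the direct error $\mathcal{E}_d(x)=h^*(x)-h(x)$ satisfies, for each $x\in\mathsf{X}$, \[ \mathsf{E}^{\phi^*}_x\Bigl[\sum_{t=0}^{\tau_{x^\circ}-1}\bigl(\mathcal{E}_B(X(t))-\eta^*\bigr)\Bigr]\le \mathcal{E}_d(x)\le \mathsf{E}^{\phi^h}_x\Bigl[\sum_{t=0}^{\tau_{x^\circ}-1}\bigl(\mathcal{E}_B(X(t))-\eta^*\bigr)\Bigr], \] where $\mathsf{E}^\phi_x$ denotes expectation for the controlled chain started at $x$ under the stationary policy $\p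hi$.
   Context: MDP model: state space $\mathsf{X}\subseteq\mathbb{R}^\ell$, action space $\mathsf{U}\subseteq\mathbb{R}^{\ell_u}$, feasible action sets $\mathsf{U}(x)$, i.i.d. disturbance $W$ on $\mathbb{R}^w$, dynamics $X(t+1)=X(t)+f(X(t),U(t),W(t+1))$. Generator $\mathcal{D}_u h(x)=\mathsf{E}[h(x+f(x,u,W(1)))]-h(x)$. Cost $c\colon\mathsf{X}\times\mathsf{U}\to\mathbb{R}_+$. The average cost of an input sequence $U$ from $x$ is $\limsup_{n\to\infty}\frac1n\sum_{t=0}^{n-1}\mathsf{E}_x[c(X(t),U(t))]$; $\eta^*$ denotes its infimum over all input sequences, assumed independent of $x$. The relative value function $h^*$ and $\eta^*$ satisfy the average cost optimality equation $\min_{u\in\mathsf{U}(x)}(c(x,u)+\mathcal{D}_u h^*(x))=\eta^*$. For a function $g$, a $(c,g)$-myopic policy is any $\phi^g(x)\in\arg\min_{u\in\mathsf{U}(x)}(c(x,u)+\mathcal{D}_u g(x))$. For a function $h$, its Bellman error is $\mathcal{E}_B(x)=\min_{u\in\mathsf{U}(x)}(c(x,u)+\mathcal{D}_u h(x))$. *)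

From HB Require Import structures.
From mathcomp Require Import all_boot all_order all_algebra.
From mathcomp Require Import all_classical all_reals all_analysis.
From mathcomp Require Import measurable_realfun.
Set Implicit Arguments. Unset Strict Implicit. Unset Printing Implicit Defensive.
Import Order.TTheory GRing.Theory Num.Theory.
Local Open Scope classical_set_scope.
Local Open Scope ring_scope.

(* Vectors of R^n are 'rV[R]_n; to speak of (Borel) measurability we view
   them as n-tuples of reals (product = Borel sigma-algebra on R^n). *)
Definition rv2t (R : realType) (n : nat) (v : 'rV[R]_n) : n.-tuple R :=
  [tuple v ord0 i | i < n].

Section MDP.
Context {R : realType} {l lu w : nat} {d : measure_display}
        {Omega : measurableType d} (P : probability Omega R).
(* disturbance sequence W(1), W(2), ... (W 0 is unused) *)
Variable W : nat -> Omega -> w.-tuple R.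
Variable f : 'rV[R]_l -> 'rV[R]_lu -> w.-tuple R -> 'rV[R]_l.

Definition iid_disturbance : Prop :=
  [/\ (forall t, (0 < t)%N -> measurable_fun setT (W t)),
      (forall s t (A : set (w.-tuple R)), (0 < s)%N -> (0 < t)%N ->
         measurable A -> P (W s @^-1` A) = P (W t @^-1` A)) &
      (forall (s : seq nat) (A : nat -> set (w.-tuple R)),
         uniq s -> all (fun t => 0 < t)%N s -> (forall t, measurable (A t)) ->
         P (\bigcap_(t in [set` s]) (W t @^-1` A t)) =
         (\prod_(t <- s) P (W t @^-1` A t))%E)].

Fixpoint state (x : 'rV[R]_l) (U : nat -> Omega -> 'rV[R]_lu) (t : nat)
  (om : Omega) : 'rV[R]_l :=
  match t with
  | 0 => x
  | t'.+1 => state x U t' om + f (state x U t' om) (U t' om) (W t'.+1 om)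
  end.

Fixpoint spstate (phi : 'rV[R]_l -> 'rV[R]_lu) (x : 'rV[R]_l) (t : nat)
  (om : Omega) : 'rV[R]_l :=
  match t with
  | 0 => x
  | t'.+1 => spstate phi x t' om
             + f (spstate phi x t' om) (phi (spstate phi x t' om)) (W t'.+1 om)
  end.

Definition spinput (phi : 'rV[R]_l -> 'rV[R]_lu) (x : 'rV[R]_l) :
  nat -> Omega -> 'rV[R]_lu := fun t om => phi (spstate phi x t om).

(* admissible input sequences from x: feasible, measurable and
   non-anticipative (U(t) depends only on W(1),...,W(t)). *)
Definition admissible (Ufeas : 'rV[R]_l -> set 'rV[R]_lu) (x : 'rV[R]_l)
  (U : nat -> Omega -> 'rV[R]_lu) : Prop :=
  [/\ forall t om, Ufeas (state x U t om) (U t om),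
      forall t, measurable_fun setT (fun om => rv2t (U t om)) &
      forall t om om', (forall s, (0 < s <= t)%N -> W s om = W s om') ->
        U t om = U t om'].

Definition avg_cost (c : 'rV[R]_l -> 'rV[R]_lu -> R) (x : 'rV[R]_l)
  (U : nat -> Omega -> 'rV[R]_lu) : \bar R :=
  limn_esup (fun n => ((n%:R)^-1)%:E *
    \sum_(t < n) \int[P]_om (c (state x U t om) (U t om))%:E)%E.

Definition gen (h : 'rV[R]_l -> R) (u : 'rV[R]_lu) (x : 'rV[R]_l) : \bar R :=
  (\int[P]_om (h (x + f x u (W 1 om)))%:E - (h x)%:E)%E.

Definition is_min_over (Ufeas : 'rV[R]_l -> set 'rV[R]_lu) (x : 'rV[R]_l)
  (F : 'rV[R]_lu -> \bar R) (m : \bar R) : Prop :=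
  (exists2 u, Ufeas x u & F u = m) /\ (forall u, Ufeas x u -> (m <= F u)%E).

Definition myopic (Xs : set 'rV[R]_l) (Ufeas : 'rV[R]_l -> set 'rV[R]_lu)
  (c : 'rV[R]_l -> 'rV[R]_lu -> R) (g : 'rV[R]_l -> R)
  (phi : 'rV[R]_l -> 'rV[R]_lu) : Prop :=
  forall x, Xs x -> Ufeas x (phi x) /\
    forall u, Ufeas x u -> ((c x (phi x))%:E + gen g (phi x) x <=
                            (c x u)%:E + gen g u x)%E.

Definition hitting_time (xo : 'rV[R]_l) (X : nat -> 'rV[R]_l) : option nat :=
  match pselect (exists n, (0 < n)%N && (X n == xo)) with
  | left e => Some (ex_minn e)
  | right _ => None
  end.

(* sum_{t=0}^{tau-1} G t along a path X; +oo when tau = +oo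
   (standard SSP convention: improper behaviour has infinite cost). *)
Definition sum_to_hit (xo : 'rV[R]_l) (X : nat -> 'rV[R]_l) (G : nat -> R)
  : \bar R :=
  match hitting_time xo X with
  | Some n => (\sum_(t < n) G t)%:E
  | None => +oo%E
  end.

Definition ssp_integrand (xo : 'rV[R]_l) (g : 'rV[R]_l -> 'rV[R]_lu -> R)
  (x : 'rV[R]_l) (U : nat -> Omega -> 'rV[R]_lu) (om : Omega) : \bar R :=
  sum_to_hit xo (fun t => state x U t om) (fun t => g (state x U t om) (U t om)).

Definition ssp_cost (xo : 'rV[R]_l) (g : 'rV[R]_l -> 'rV[R]_lu -> R)
  (x : 'rV[R]_l) (U : nat -> Omega -> 'rV[R]_lu) : \bar R :=
  \int[P]_om ssp_integrand xo g x U om.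

Definition ssp_representation (Ufeas : 'rV[R]_l -> set 'rV[R]_lu)
  (xo : 'rV[R]_l) (g : 'rV[R]_l -> 'rV[R]_lu -> R) (hv : 'rV[R]_l -> R)
  (phi : 'rV[R]_l -> 'rV[R]_lu) (x : 'rV[R]_l) : Prop :=
  [/\ admissible Ufeas x (spinput phi x),
      ssp_cost xo g x (spinput phi x) = (hv x)%:E &
      forall U, admissible Ufeas x U -> ((hv x)%:E <= ssp_cost xo g x U)%E].

End MDP.

From HB Require Import structures.
From mathcomp Require Import all_boot all_order all_algebra.
From mathcomp Require Import all_classical all_reals all_analysis.
From mathcomp Require Import measurable_realfun.
From mathcomp Require Import lra.
Import Order.TTheory GRing.Theory Num.Theory.
Local Open Scope classical_set_scope.
Local Open Scope ring_scope.

(* Along every path, the SSP sum of [c - eta*] is the SSP sum of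
   [c^h - eta] plus the SSP sum of [E_B - eta*] (all three are [+oo] when
   [x°] is never reached).  Under [phi*] the first expectation is [h*(x)] and
   the second is at least [h(x)], since [h] is the SSP minimum; this gives the
   lower bound, and exchanging the roles of [phi*] and [phi^h] gives the upper
   one.  The expectations may be infinite, so the additivity of the integral is
   replaced by inequalities between the integrals of positive and negative
   parts, which need only one of the integrals to be finite. *)

Section extended_real_parts.
Context {R : realType}.
Local Open Scope ereal_scope.
Implicit Types b c : \bar R.

Lemma eposD_eneg b c :
  maxe (b + c) 0 + maxe (- b) 0 + maxe (- c) 0 =
  maxe (- (b + c)) 0 + maxe b 0 + maxe c 0.
Proof.
case: b => [b| |]; case: c => [c| |]; rewrite !maxEle /adde /= ?lee_fin;
  repeat case: ifPn => //=; rewrite ?lee_fin -?EFinD;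
  try (move=> *; apply/eqP; rewrite eqe; apply/eqP; lra).
Qed.

Lemma eneg_le_enegD_epos b c : maxe (- c) 0 <= maxe (- (b + c)) 0 + maxe b 0.
Proof.
case: b => [b| |]; case: c => [c| |]; rewrite !maxEle /adde /= ?lee_fin;
  repeat case: ifPn => //=; rewrite ?lee_fin -?EFinD ?lee_fin ?leey ?leNye //;
  lra.
Qed.

Lemma le_sube_subeB (pA nA pB nB pC nC : \bar R) (a : R) :
  0 <= pB -> 0 <= nB -> 0 <= pC -> 0 <= nC ->
  pA - nA = a%:E -> pA + nB + nC = nA + pB + pC ->
  pC - nC <= (pA - nA) - (pB - nB).
Proof.
move=> + + + + + /eqP.
case: pA => [pA| |]; case: nA => [nA| |]; case: pB => [pB| |];
  case: nB => [nB| |]; case: pC => [pC| |]; case: nC => [nC| |] //=;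
  rewrite /adde /= ?lee_fin ?leey ?leNye // => _ _ _ _ _.
by rewrite -!EFinD eqe => /eqP; lra.
Qed.

Lemma subeB_le_sube (pA nA pB nB pC nC : \bar R) (b : R) :
  0 <= pA -> 0 <= nA -> 0 <= pC -> 0 <= nC ->
  pB - nB = b%:E -> nC <= nA + pB -> pA + nB + nC = nA + pB + pC ->
  (pA - nA) - (pB - nB) <= pC - nC.
Proof.
move=> + + + + + + /eqP.
case: pA => [pA| |]; case: nA => [nA| |]; case: pB => [pB| |];
  case: nB => [nB| |]; case: pC => [pC| |]; case: nC => [nC| |] //=;
  rewrite /adde /= ?lee_fin ?leey ?leNye // => _ _ _ _ _.
by rewrite -!EFinD eqe => ? /eqP; lra.
Qed.

End extended_real_parts.

Section integral_of_sum.
Context {d : measure_display} {T : measurableType d} {R : realType}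
  (mu : {measure set T -> \bar R}).
Local Open Scope ereal_scope.
Context {A B C : T -> \bar R}.
Hypotheses (mA : measurable_fun setT A) (mB : measurable_fun setT B)
  (mC : measurable_fun setT C) (ABC : forall x, A x = B x + C x).

Let integral_parts_balance :
  \int[mu]_x A^\+ x + \int[mu]_x B^\- x + \int[mu]_x C^\- x =
  \int[mu]_x A^\- x + \int[mu]_x B^\+ x + \int[mu]_x C^\+ x.
Proof.
rewrite -!ge0_integralD //;
  do ?[exact: measurable_funepos | exact: measurable_funeneg
      | apply: emeasurable_funD | by move=> x _; apply: adde_ge0].
by apply: eq_integral => x _; rewrite !funeposE !funenegE ABC eposD_eneg.
Qed.

Let integral_eneg_le :
  \int[mu]_x C^\- x <= \int[mu]_x A^\- x + \int[mu]_x B^\+ x.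
Proof.
have mAB : measurable_fun setT (A^\- \+ B^\+).
  by apply: emeasurable_funD;
    [exact: measurable_funeneg | exact: measurable_funepos].
rewrite -ge0_integralD //;
  [|exact: measurable_funeneg | exact: measurable_funepos].
apply: ge0_le_integral => //; first exact: measurable_funeneg.
by move=> x _; rewrite !funeposE !funenegE ABC eneg_le_enegD_epos.
Qed.

Lemma integral_le_integralB (a : R) : \int[mu]_x A x = a%:E ->
  \int[mu]_x C x <= \int[mu]_x A x - \int[mu]_x B x.
Proof.
rewrite [\int[mu]_x A x]integralE [\int[mu]_x B x]integralE
  [\int[mu]_x C x]integralE => intA.
by apply: le_sube_subeB intA integral_parts_balance; apply: integral_ge0.
Qed.

Lemma integralB_le_integral (b : R) : \int[mu]_x B x = b%:E ->
  \int[mu]_x A x - \int[mu]_x B x <= \int[mu]_x C x.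
Proof.
rewrite [\int[mu]_x A x]integralE [\int[mu]_x B x]integralE
  [\int[mu]_x C x]integralE => intB.
by apply: subeB_le_sube intB integral_eneg_le integral_parts_balance;
  apply: integral_ge0.
Qed.

End integral_of_sum.

Section ssp_integrand_additive.
Context {R : realType} {l lu w : nat} {d : measure_display}
  {Omega : measurableType d}.
Variables (W : nat -> Omega -> w.-tuple R)
  (f : 'rV[R]_l -> 'rV[R]_lu -> w.-tuple R -> 'rV[R]_l) (xo : 'rV[R]_l).

Lemma ssp_integrandD (g g1 g2 : 'rV[R]_l -> 'rV[R]_lu -> R) x U om :
  (forall y u, g y u = g1 y u + g2 y u) ->
  ssp_integrand W f xo g x U om =
  (ssp_integrand W f xo g1 x U om + ssp_integrand W f xo g2 x U om)%E.
Proof.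
move=> g12; rewrite /ssp_integrand /sum_to_hit.
case: hitting_time => [n|] //.
by rewrite -EFinD -big_split; congr _%:E; apply: eq_bigr => t _; rewrite g12.
Qed.

End ssp_integrand_additive.

Theorem proposition2
  (R : realType) (l lu w : nat) (d : measure_display)
  (Omega : measurableType d) (P : probability Omega R)
  (W : nat -> Omega -> w.-tuple R)
  (f : 'rV[R]_l -> 'rV[R]_lu -> w.-tuple R -> 'rV[R]_l)
  (Xs : set 'rV[R]_l) (Us : set 'rV[R]_lu) (Ufeas : 'rV[R]_l -> set 'rV[R]_lu)
  (c : 'rV[R]_l -> 'rV[R]_lu -> R)
  (etas : R) (hs : 'rV[R]_l -> R) (phis : 'rV[R]_l -> 'rV[R]_lu)
  (xo : 'rV[R]_l)
  (h : 'rV[R]_l -> R) (eta : R) (EB : 'rV[R]_l -> R)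
  (phih : 'rV[R]_l -> 'rV[R]_lu) :
  (* standing assumptions on the MDP model *)
  iid_disturbance P W ->
  (forall x, Ufeas x `<=` Us) ->
  (forall x u t om, Xs x -> Ufeas x u -> Xs (x + f x u (W t om))) ->
  (forall x u, 0 <= c x u) ->
  (* eta* is the optimal average cost, independent of the initial state *)
  (forall x, Xs x ->
     etas%:E = ereal_inf [set avg_cost P W f c x U | U in admissible W f Ufeas x]) ->
  (* average cost optimality equation for (h*, eta* ) *)
  (forall x, Xs x ->
     is_min_over Ufeas x (fun u => ((c x u)%:E + gen P W f hs u x)%E) etas%:E) ->
  Xs xo ->
  (* SSP representation of h*, attained by the (c,h* )-myopic policy phi* *)
  myopic P W f Xs Ufeas c hs phis ->
  (forall x, Xs x -> ssp_representation P W f Ufeas xo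
                       (fun y u => c y u - etas) hs phis x) ->
  (* h, eta, its Bellman error EB and the perturbed cost c^h *)
  0 <= eta ->
  (forall x, Xs x ->
     is_min_over Ufeas x (fun u => ((c x u)%:E + gen P W f h u x)%E) (EB x)%:E) ->
  (* SSP representation of h, attained by the (c^h,h)-myopic policy phi^h *)
  myopic P W f Xs Ufeas (fun y u => c y u - EB y + eta) h phih ->
  (forall x, Xs x -> ssp_representation P W f Ufeas xo
                       (fun y u => (c y u - EB y + eta) - eta) h phih x) ->
  (* the expectations involved are expectations of random variables *)
  (forall x (phi : 'rV[R]_l -> 'rV[R]_lu) (g : 'rV[R]_l -> 'rV[R]_lu -> R),
     Xs x -> (phi = phis \/ phi = phih) ->
     [\/ g = (fun y u => c y u - etas),
         g = (fun y u => (c y u - EB y + eta) - eta) |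
         g = (fun y _ => EB y - etas)] ->
     measurable_fun setT (ssp_integrand W f xo g x (spinput W f phi x))) ->
  (* conclusion: bounds on the direct error E_d = h* - h *)
  forall x, Xs x ->
    (ssp_cost P W f xo (fun y _ => (EB y - etas)%R) x (spinput W f phis x)
       <= (hs x - h x)%:E
       <= ssp_cost P W f xo (fun y _ => (EB y - etas)%R) x (spinput W f phih x))%E.
Proof.
(* Only the two SSP representations and the measurability hypothesis are
   used. *)
move=> _ _ _ _ _ _ _ _ ssps _ _ _ ssph meas x Xx.
have [adm_s cost_s min_s] := ssps x Xx.
have [adm_h cost_h min_h] := ssph x Xx.
rewrite /ssp_cost in cost_s cost_h min_s min_h *.
have split_cost phi om :
  ssp_integrand W f xo (fun y u => c y u - etas) x (spinput W f phi x) om =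
  (ssp_integrand W f xo (fun y u => (c y u - EB y + eta - eta)%R) x
     (spinput W f phi x) om +
   ssp_integrand W f xo (fun y _ => (EB y - etas)%R) x (spinput W f phi x) om)%E.
  by apply: ssp_integrandD => y u; lra.
have meas_s g := meas x phis g Xx (or_introl erefl).
have meas_h g := meas x phih g Xx (or_intror erefl).
apply/andP; split.
- apply: le_trans (integral_le_integralB P (meas_s _ (@Or31 _ _ _ erefl))
    (meas_s _ (@Or32 _ _ _ erefl)) (meas_s _ (@Or33 _ _ _ erefl))
    (split_cost phis) _ cost_s) _.
  by rewrite cost_s EFinB; apply: leeB; [exact: lexx | exact: min_h].
- apply: le_trans (integralB_le_integral P (meas_h _ (@Or31 _ _ _ erefl))
    (meas_h _ (@Or32 _ _ _ erefl)) (meas_h _ (@Or33 _ _ _ erefl))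
    (split_cost phih) _ cost_h).
  by rewrite cost_h EFinB; apply: leeB; [exact: min_s | exact: lexx].
Qed.
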